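(* Let $(y(n))_{n\ge1}$ be a sequence of positive reals and suppose it has Poissonian pair correlation in the sense that for every real-valued $g\in C_c^\infty(\mathbb{R})$, $$\lim_{N\to\infty}\frac1N\sum_{\substack{n_1,n_2\in[N]\\ n_1\neq n_2}}\sum_{k\in\mathbb{Z}} g\big(N(y(n_1)-y(n_2)+k)\big)=\int_{\mathbb{R}} g .$$ Let $f\in C_c^\infty(\mathbb{R})$ be real-valued and define $F(z_1,z_2):=\int_{\mathbb{R}} f(s)f(z_1+z_2+s)f(z_2+s)\,\mathrm{d}s$. Then $$\lim_{N\to\infty}\frac1N\sum^{*}_{\mathbf{n}\in[N]^3}\sum_{\mathbf{k}\in\mathbb{Z}^2}F\big(N(y(n_1)-y(n_2)+k_1),\,N(y(n_2)-y(n_3)+k_2)\big)=\Big(\int_{\mathbb{R}} f\Big)^3$$ holds if and only if $$\lim_{N\to\infty}\mathcal{M}^{(3)}(N)=\mathbf{E}(f)^3+3\,\mathbf{E}(f)\,\mathbf{E}(f^2)+\mathbf{E}(f^3).$$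
   Context: $[N]=\{1,\dots,N\}$; $\sum^*$ denotes summation over triples $\mathbf{n}=(n_1,n_2,n_3)$ with pairwise distinct entries. For $h$ integrable on $\mathbb{R}$, $\mathbf{E}(h):=\int_{\mathbb{R}}h(x)\,\mathrm{d}x$; so $\mathbf{E}(f^j)=\int_{\mathbb{R}} f(x)^j\,\mathrm{d}x$. Define $S_N(s):=\sum_{n\in[N]}\sum_{k\in\mathbb{Z}} f(N(y(n)+k+s))$ and $\mathcal{M}^{(3)}(N):=\int_0^1 S_N(s)^3\,\mathrm{d}s$. *)

From Stdlib Require Import Reals ZArith Arith.
From Coquelicot Require Import Coquelicot.
Open Scope R_scope.

Definition smooth (f : R -> R) : Prop := forall (n : nat) (x : R), ex_derive_n f n x.
Definition compact_support (f : R -> R) : Prop :=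
  exists M : R, forall x : R, M < Rabs x -> f x = 0.
Definition Cc_infty (f : R -> R) : Prop := smooth f /\ compact_support f.

Definition E (h : R -> R) : R :=
  RInt_gen h (Rbar_locally m_infty) (Rbar_locally p_infty).

(* sum over k in Z (all series considered have finitely many nonzero terms) *)
Definition sumZ (h : Z -> R) : R :=
  Series (fun n : nat => h (Z.of_nat n)) + Series (fun n : nat => h (- Z.of_nat n - 1)%Z).

Definition sumN (N : nat) (h : nat -> R) : R := sum_n_m h 1 N.

Definition pair_sum (N : nat) (h : nat -> nat -> R) : R :=
  sumN N (fun n1 => sumN N (fun n2 => if Nat.eqb n1 n2 then 0 else h n1 n2)).

Definition triple_sum (N : nat) (h : nat -> nat -> nat -> R) : R :=
  sumN N (fun n1 => sumN N (fun n2 => sumN N (fun n3 =>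
    if (Nat.eqb n1 n2 || Nat.eqb n1 n3 || Nat.eqb n2 n3)%bool then 0 else h n1 n2 n3))).

Definition poissonian_pc (y : nat -> R) : Prop :=
  forall g : R -> R, Cc_infty g ->
    is_lim_seq (fun N : nat => / INR N *
      pair_sum N (fun n1 n2 => sumZ (fun k => g (INR N * (y n1 - y n2 + IZR k)))))
      (E g).

Definition Ftriple (f : R -> R) (z1 z2 : R) : R :=
  E (fun s => f s * f (z1 + z2 + s) * f (z2 + s)).

Definition S_N (f : R -> R) (y : nat -> R) (N : nat) (s : R) : R :=
  sumN N (fun n => sumZ (fun k => f (INR N * (y n + IZR k + s)))).

Definition M3 (f : R -> R) (y : nat -> R) (N : nat) : R :=
  RInt (fun s => (S_N f y N s) ^ 3) 0 1.

Definition T3 (f : R -> R) (y : nat -> R) (N : nat) : R :=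
  / INR N * triple_sum N (fun n1 n2 n3 =>
    sumZ (fun k1 => sumZ (fun k2 =>
      Ftriple f (INR N * (y n1 - y n2 + IZR k1)) (INR N * (y n2 - y n3 + IZR k2))))).

(* Expanding the cube of [S_N(s) = sum_n sum_k f (N (y n + k + s))] over index triples splits
   [M3 N] into pairwise distinct triples, triples with exactly two equal indices, and the
   diagonal. Once [N] exceeds the diameter of the support of [f], the translates in [k] have
   disjoint supports, so powers pass through the [k]-sums, and unfolding the integral over one
   period turns the three parts into [T3 N], into [3/N sum_{n1 <> n2} sum_k G (N (y n1 - y n2 + k))]
   with [G z = int f(u)^2 f(u - z) du], and into [E (f^3)]. The kernel [G] is again in
   [C_c^infty] with [int G = E f * E (f^2)], so Poissonian pair correlation gives the limit of
   the middle term: [M3 N - T3 N] converges to [3 E f E (f^2) + E (f^3)]. *)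

From Stdlib Require Import Reals ZArith Lra Lia Classical FunctionalExtensionality.
From Coquelicot Require Import Coquelicot.
Open Scope R_scope.

Lemma is_series_finite (a : nat -> R) K :
  (forall j, (K < j)%nat -> a j = 0) -> is_series a (sum_n a K).
Proof.
  intros Ha. apply (filterlim_ext_loc (fun _ => sum_n a K)); [|apply filterlim_const].
  exists K. intros n Hn. induction Hn as [|n Hn IH]; [reflexivity|].
  rewrite sum_Sn, <- IH, (Ha (S n)) by lia. symmetry. apply (plus_zero_r (G:=R_AbelianMonoid)).
Qed.

Lemma Series_finite (a : nat -> R) K :
  (forall j, (K < j)%nat -> a j = 0) -> Series a = sum_n a K.
Proof. intros Ha. apply is_series_unique, is_series_finite, Ha. Qed.

Definition suppZ_within (K : nat) (h : Z -> R) : Prop :=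
  forall k, (Z.of_nat K < Z.abs k)%Z -> h k = 0.

Definition finsuppZ (h : Z -> R) : Prop := exists K, suppZ_within K h.

Definition sumZ_upto (K : nat) (h : Z -> R) : R :=
  sum_n (fun n => h (Z.of_nat n)) K + sum_n (fun n => h (- Z.of_nat n - 1)%Z) K.

Lemma sumZ_upto_eq K h : suppZ_within K h -> sumZ h = sumZ_upto K h.
Proof.
  intros H. unfold sumZ, sumZ_upto.
  rewrite (Series_finite _ K), (Series_finite _ K); [reflexivity| |];
    intros j Hj; apply H; lia.
Qed.

Lemma sumZ_ext h1 h2 : (forall k, h1 k = h2 k) -> sumZ h1 = sumZ h2.
Proof. intros H. replace h2 with h1; auto. apply functional_extensionality; auto. Qed.

Lemma sumZ_scal_l c h : sumZ (fun k => c * h k) = c * sumZ h.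
Proof. unfold sumZ. rewrite !Series_scal_l. ring. Qed.

Lemma sumZ_scal_r c h : sumZ (fun k => h k * c) = sumZ h * c.
Proof. rewrite Rmult_comm, <- sumZ_scal_l. apply sumZ_ext; intros; ring. Qed.

(* Reindexing [k -> -k] just exchanges the two half-line series of [sumZ]. *)
Lemma sumZ_opp_succ h : sumZ (fun k => h (- k)%Z) = sumZ (fun k => h (k + 1)%Z).
Proof.
  unfold sumZ. rewrite Rplus_comm. f_equal; apply Series_ext; intros n; f_equal; lia.
Qed.

Lemma sumZ_shift1 h : finsuppZ h -> sumZ (fun k => h (k + 1)%Z) = sumZ h.
Proof.
  intros [K H].
  assert (Hpos : ex_series (fun n => h (Z.of_nat n)))
    by (eexists; apply (is_series_finite _ K); intros j Hj; apply H; lia).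
  assert (Hneg : ex_series (fun n => h (- Z.of_nat n)%Z))
    by (eexists; apply (is_series_finite _ K); intros j Hj; apply H; lia).
  unfold sumZ.
  rewrite (Series_ext (fun n => h (- Z.of_nat n - 1 + 1)%Z) (fun n => h (- Z.of_nat n)%Z))
    by (intros; f_equal; lia).
  rewrite (Series_incr_1 _ Hpos), (Series_incr_1 _ Hneg).
  rewrite (Series_ext (fun k => h (- Z.of_nat (S k))%Z) (fun n => h (- Z.of_nat n - 1)%Z))
    by (intros; f_equal; lia).
  rewrite (Series_ext (fun k => h (Z.of_nat (S k))) (fun n => h (Z.of_nat n + 1)%Z))
    by (intros; f_equal; lia).
  simpl. ring.
Qed.

Lemma finsuppZ_shift h m : finsuppZ h -> finsuppZ (fun k => h (k + m)%Z).
Proof. intros [K H]. exists (K + Z.to_nat (Z.abs m))%nat. intros k Hk. apply H. lia. Qed.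

Lemma sumZ_shift_nat h j : finsuppZ h -> sumZ (fun k => h (k + Z.of_nat j)%Z) = sumZ h.
Proof.
  revert h. induction j as [|j IH]; intros h Hh.
  - apply sumZ_ext. intros; f_equal; lia.
  - rewrite <- (IH h Hh), <- (sumZ_shift1 _ (finsuppZ_shift h (Z.of_nat j) Hh)).
    apply sumZ_ext. intros; f_equal; lia.
Qed.

Lemma sumZ_shift h m : finsuppZ h -> sumZ (fun k => h (k + m)%Z) = sumZ h.
Proof.
  intros Hh. destruct (Z_le_gt_dec 0 m).
  - replace m with (Z.of_nat (Z.to_nat m)) by lia. apply sumZ_shift_nat, Hh.
  - rewrite <- (sumZ_shift_nat _ (Z.to_nat (- m)) (finsuppZ_shift h m Hh)).
    apply sumZ_ext. intros k. f_equal. lia.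
Qed.

Lemma sumZ_opp h : finsuppZ h -> sumZ (fun k => h (- k)%Z) = sumZ h.
Proof. intros Hh. rewrite sumZ_opp_succ. apply sumZ_shift1, Hh. Qed.

Lemma sumZ_single h k0 : (forall k, k <> k0 -> h k = 0) -> sumZ h = h k0.
Proof.
  intros H.
  assert (Hh : finsuppZ h) by (exists (Z.to_nat (Z.abs k0)); intros k Hk; apply H; lia).
  rewrite <- (sumZ_shift h k0 Hh), (sumZ_upto_eq 0).
  - unfold sumZ_upto. rewrite !sum_O, (H (- Z.of_nat 0 - 1 + k0)%Z) by lia.
    simpl. rewrite Rplus_0_r. reflexivity.
  - intros k Hk. apply H. lia.
Qed.

Lemma sumZ_comp_single h (phi : R -> R) : phi 0 = 0 ->
  (forall k1 k2, h k1 <> 0 -> h k2 <> 0 -> k1 = k2) ->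
  sumZ (fun k => phi (h k)) = phi (sumZ h).
Proof.
  intros Hphi Huniq.
  assert (Hk0 : exists k0, forall k, k <> k0 -> h k = 0).
  { destruct (classic (exists k0, h k0 <> 0)) as [[k0 Hk0]|Hnone].
    - exists k0. intros k Hk. apply NNPP. intros Hhk. apply Hk, (Huniq k k0 Hhk Hk0).
    - exists 0%Z. intros k _. apply NNPP. intros Hhk. apply Hnone. exists k. exact Hhk. }
  destruct Hk0 as [k0 Hk0].
  rewrite (sumZ_single h k0 Hk0). apply (sumZ_single (fun k => phi (h k))).
  intros k Hk. rewrite Hk0; auto.
Qed.

Lemma sumN_ext N (u v : nat -> R) :
  (forall k, (1 <= k <= N)%nat -> u k = v k) -> sumN N u = sumN N v.
Proof. apply sum_n_m_ext_loc. Qed.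

Lemma sumN_plus N (u v : nat -> R) : sumN N (fun k => u k + v k) = sumN N u + sumN N v.
Proof. apply (sum_n_m_plus u v). Qed.

Lemma sumN_scal_l N c (u : nat -> R) : sumN N (fun k => c * u k) = c * sumN N u.
Proof. apply (sum_n_m_mult_l c u). Qed.

Lemma sumN_scal_r N c (u : nat -> R) : sumN N (fun k => u k * c) = sumN N u * c.
Proof. rewrite Rmult_comm, <- sumN_scal_l. apply sumN_ext. intros; ring. Qed.

Lemma sumN_zero N : sumN N (fun _ => 0) = 0.
Proof. apply (sum_n_m_const_zero (G:=R_AbelianMonoid)). Qed.

Lemma sumN_O (u : nat -> R) : sumN 0 u = 0.
Proof. apply (sum_n_m_zero (G:=R_AbelianMonoid)). lia. Qed.

Lemma sumN_S N (u : nat -> R) : sumN (S N) u = sumN N u + u (S N).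
Proof. apply (sum_n_Sm (G:=R_AbelianMonoid)). lia. Qed.

Lemma sumN_const N c : sumN N (fun _ => c) = INR N * c.
Proof. unfold sumN. rewrite sum_n_m_const. f_equal. f_equal. lia. Qed.

Lemma sumN_delta N i (u : nat -> R) : (1 <= i <= N)%nat ->
  sumN N (fun j => if Nat.eqb i j then u j else 0) = u i.
Proof.
  induction N as [|N IH]; intros Hi; [lia|].
  rewrite sumN_S. destruct (Nat.eq_dec i (S N)) as [->|ne].
  - rewrite Nat.eqb_refl, (sumN_ext _ _ (fun _ => 0)), sumN_zero; [ring|].
    intros k Hk. destruct (Nat.eqb_spec (S N) k); [lia|reflexivity].
  - rewrite IH by lia. destruct (Nat.eqb_spec i (S N)); [lia|ring].
Qed.

Lemma sumN_swap N (h : nat -> nat -> R) :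
  sumN N (fun i => sumN N (fun j => h i j)) = sumN N (fun j => sumN N (fun i => h i j)).
Proof.
  assert (Hgen : forall L, sumN L (fun i => sumN N (fun j => h i j))
                          = sumN N (fun j => sumN L (fun i => h i j))).
  { induction L as [|L IH].
    - rewrite sumN_O, (sumN_ext _ _ (fun _ => 0)), sumN_zero; [reflexivity|].
      intros; apply sumN_O.
    - rewrite sumN_S, IH, <- sumN_plus. apply sumN_ext. intros; rewrite sumN_S; reflexivity. }
  apply Hgen.
Qed.

Lemma sumN_cube_expand (a : nat -> R) N :
  sumN N a ^ 3 = sumN N (fun i => sumN N (fun j => sumN N (fun l => a i * a j * a l))).
Proof.
  replace (sumN N a ^ 3) with (sumN N a * (sumN N a * sumN N a)) by ring.
  rewrite <- (sumN_scal_r N (sumN N a * sumN N a) a). apply sumN_ext. intros i _.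
  rewrite <- (sumN_scal_r N (sumN N a) a), <- sumN_scal_l. apply sumN_ext. intros j _.
  replace (a i * (a j * sumN N a)) with (a i * a j * sumN N a) by ring.
  rewrite <- sumN_scal_l. apply sumN_ext. intros; ring.
Qed.

(* The five classes of index triples: pairwise distinct, [i = j <> l], [i = l <> j],
   [j = l <> i] and [i = j = l]. *)
Lemma cube_split (a : nat -> R) i j l :
  a i * a j * a l =
    (if (Nat.eqb i j || Nat.eqb i l || Nat.eqb j l)%bool then 0 else a i * a j * a l)
  + (if Nat.eqb i j then (if Nat.eqb j l then 0 else a j ^ 2 * a l) else 0)
  + (if Nat.eqb i l then (if Nat.eqb i j then 0 else a i ^ 2 * a j) else 0)
  + (if Nat.eqb j l then (if Nat.eqb i j then 0 else a i * a j ^ 2) else 0)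
  + (if Nat.eqb i j then (if Nat.eqb j l then a j ^ 3 else 0) else 0).
Proof.
  destruct (Nat.eqb_spec i j), (Nat.eqb_spec i l), (Nat.eqb_spec j l); simpl; subst; try lia; ring.
Qed.

Lemma sumN_cube_row (a : nat -> R) N i : (1 <= i <= N)%nat ->
  sumN N (fun j => sumN N (fun l => a i * a j * a l)) =
    sumN N (fun j => sumN N (fun l =>
      if (Nat.eqb i j || Nat.eqb i l || Nat.eqb j l)%bool then 0 else a i * a j * a l))
  + 2 * sumN N (fun j => if Nat.eqb i j then 0 else a i ^ 2 * a j)
  + sumN N (fun j => if Nat.eqb i j then 0 else a i * a j ^ 2)
  + a i ^ 3.
Proof.
  intros Hi.
  rewrite (sumN_ext N _ (fun j => sumN N (fun l =>
      if (Nat.eqb i j || Nat.eqb i l || Nat.eqb j l)%bool then 0 else a i * a j * a l)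
    + sumN N (fun l => if Nat.eqb i j then (if Nat.eqb j l then 0 else a j ^ 2 * a l) else 0)
    + sumN N (fun l => if Nat.eqb i l then (if Nat.eqb i j then 0 else a i ^ 2 * a j) else 0)
    + sumN N (fun l => if Nat.eqb j l then (if Nat.eqb i j then 0 else a i * a j ^ 2) else 0)
    + sumN N (fun l => if Nat.eqb i j then (if Nat.eqb j l then a j ^ 3 else 0) else 0))).
  2: { intros j _. rewrite <- !sumN_plus. apply sumN_ext. intros l _. apply cube_split. }
  rewrite !sumN_plus.
  assert (Hif : forall (b : bool) (u : nat -> R),
    sumN N (fun l => if b then u l else 0) = if b then sumN N u else 0).
  { intros [|] u; [reflexivity|apply sumN_zero]. }
  rewrite (sumN_ext N (fun j => sumN N (fun l => if Nat.eqb i j then _ else 0))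
             (fun j => if Nat.eqb i j then sumN N (fun l => if Nat.eqb j l then 0 else a j ^ 2 * a l) else 0))
    by (intros; apply Hif).
  rewrite (sumN_delta N i (fun j => sumN N (fun l => if Nat.eqb j l then 0 else a j ^ 2 * a l))) by exact Hi.
  rewrite (sumN_ext N (fun j => sumN N (fun l => if Nat.eqb i l then _ else 0))
             (fun j => if Nat.eqb i j then 0 else a i ^ 2 * a j))
    by (intros j _; apply (sumN_delta N i (fun _ => if Nat.eqb i j then 0 else a i ^ 2 * a j)), Hi).
  rewrite (sumN_ext N (fun j => sumN N (fun l => if Nat.eqb j l then _ else 0))
             (fun j => if Nat.eqb i j then 0 else a i * a j ^ 2))
    by (intros j Hj; apply (sumN_delta N j (fun _ => if Nat.eqb i j then 0 else a i * a j ^ 2)), Hj).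
  rewrite (sumN_ext N (fun j => sumN N (fun l => if Nat.eqb i j then _ else 0))
             (fun j => if Nat.eqb i j then a j ^ 3 else 0)).
  2: { intros j Hj. rewrite Hif. destruct (Nat.eqb i j); [|reflexivity].
       apply (sumN_delta N j (fun _ => a j ^ 3)), Hj. }
  rewrite (sumN_delta N i (fun j => a j ^ 3)) by exact Hi.
  ring.
Qed.

Lemma sumN_cube (a : nat -> R) N :
  sumN N a ^ 3 = triple_sum N (fun i j l => a i * a j * a l)
    + 3 * pair_sum N (fun i j => a i ^ 2 * a j) + sumN N (fun i => a i ^ 3).
Proof.
  rewrite sumN_cube_expand, (sumN_ext N _ _ (fun i Hi => sumN_cube_row a N i Hi)).
  rewrite !sumN_plus, sumN_scal_l. unfold triple_sum, pair_sum. cbv beta.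
  rewrite (sumN_swap N (fun i j => if Nat.eqb i j then 0 else a i * a j ^ 2)).
  rewrite (sumN_ext N (fun j => sumN N (fun i => if Nat.eqb i j then 0 else a i * a j ^ 2))
             (fun i => sumN N (fun j => if Nat.eqb i j then 0 else a i ^ 2 * a j))).
  - ring.
  - intros i _. apply sumN_ext. intros j _.
    rewrite Nat.eqb_sym. destruct (Nat.eqb i j); [reflexivity|ring].
Qed.

Lemma pair_sum_scal_l N c (h : nat -> nat -> R) :
  pair_sum N (fun i j => c * h i j) = c * pair_sum N h.
Proof.
  unfold pair_sum. rewrite <- sumN_scal_l. apply sumN_ext. intros i _.
  rewrite <- sumN_scal_l. apply sumN_ext. intros j _. destruct (Nat.eqb i j); ring.
Qed.

Lemma triple_sum_scal_l N c (h : nat -> nat -> nat -> R) :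
  triple_sum N (fun i j l => c * h i j l) = c * triple_sum N h.
Proof.
  unfold triple_sum. rewrite <- sumN_scal_l. apply sumN_ext. intros i _.
  rewrite <- sumN_scal_l. apply sumN_ext. intros j _.
  rewrite <- sumN_scal_l. apply sumN_ext. intros l _. destruct (_ || _)%bool; ring.
Qed.

Definition contR (F : R -> R) : Prop := forall x, continuous F x.

Lemma cont_const (c x : R) : continuous (fun _ : R => c) x.
Proof. apply continuous_const. Qed.

Lemma cont_id x : continuous (fun t : R => t) x.
Proof. apply continuous_id. Qed.

Lemma cont_plus (F G : R -> R) x :
  continuous F x -> continuous G x -> continuous (fun t => F t + G t) x.
Proof. apply (continuous_plus F G). Qed.

Lemma cont_minus (F G : R -> R) x :
  continuous F x -> continuous G x -> continuous (fun t => F t - G t) x.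
Proof. intros HF HG. apply (continuous_plus F (fun t => - G t)); [|apply (continuous_opp G)]; auto. Qed.

Lemma cont_opp (F : R -> R) x : continuous F x -> continuous (fun t => - F t) x.
Proof. apply (continuous_opp F). Qed.

Lemma cont_mult (F G : R -> R) x :
  continuous F x -> continuous G x -> continuous (fun t => F t * G t) x.
Proof. apply (continuous_mult F G). Qed.

Lemma cont_pow (F : R -> R) n x : continuous F x -> continuous (fun t => F t ^ n) x.
Proof.
  intros HF. induction n as [|n IH]; [apply cont_const|]. apply (cont_mult F); auto.
Qed.

Lemma cont_comp (G : R -> R) (F : R -> R) x :
  contR G -> continuous F x -> continuous (fun t => G (F t)) x.
Proof. intros HG HF. apply (continuous_comp F G); auto. Qed.

Lemma cont_sum_n (F : nat -> R -> R) K x : (forall i, continuous (F i) x) ->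
  continuous (fun t => sum_n (fun i => F i t) K) x.
Proof.
  intros HF. induction K as [|K IH].
  - apply (continuous_ext (F 0%nat)); [intros; rewrite sum_O; reflexivity|apply HF].
  - apply (continuous_ext (fun t => sum_n (fun i => F i t) K + F (S K) t));
      [intros; rewrite sum_Sn; reflexivity|].
    apply cont_plus; auto.
Qed.

(* Syntax-directed, so that [apply] never unfolds a defined function in search
   of a match. *)
Ltac cont_step :=
  match goal with
  | H : contR ?G |- continuous ?G _ => apply H
  | H : contR ?G |- continuous (fun t => ?G t) _ => apply H
  | |- continuous (fun _ => ?c) _ => apply cont_const
  | |- continuous (fun t => t) _ => apply cont_id
  | |- continuous (fun t => @?A t ^ ?n) _ => apply (cont_pow A n)
  | |- continuous (fun t => @?A t + @?B t) _ => apply (cont_plus A B)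
  | |- continuous (fun t => @?A t - @?B t) _ => apply (cont_minus A B)
  | |- continuous (fun t => - @?A t) _ => apply (cont_opp A)
  | |- continuous (fun t => @?A t * @?B t) _ => apply (cont_mult A B)
  | H : contR ?G |- continuous (fun t => ?G (@?A t)) _ => apply (cont_comp G A _ H)
  | H : forall i, contR (?G i) |- continuous (fun t => ?G ?i t) _ => apply H
  end.

Ltac solve_cont :=
  lazymatch goal with |- contR _ => let x := fresh "x" in intro x | _ => idtac end;
  repeat cont_step.

(* [RInt] is typed in Coquelicot's normed-module carrier, which is [R] only up to
   conversion, and [ring]/[field] reject such atoms: we abstract them as reals. *)
Ltac abstract_integrals :=
  repeat match goal with
  | |- context [RInt ?F ?a ?b] => let I := fresh "I" in generalize (RInt F a b : R); intro I
  | |- context [E ?F] => let I := fresh "I" in generalize (E F : R); intro I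
  end;
  try match goal with |- @eq _ ?a ?b => change (@eq R a b) end.

Lemma contR_ex_RInt (F : R -> R) a b : contR F -> ex_RInt F a b.
Proof. intros H. apply (ex_RInt_continuous (V:=R_CompleteNormedModule)). intros; apply H. Qed.

Lemma is_RInt_of_RInt (F : R -> R) a b v : contR F -> RInt F a b = v -> is_RInt F a b v.
Proof. intros HF <-. apply (RInt_correct (V:=R_CompleteNormedModule)), contR_ex_RInt, HF. Qed.

Lemma RInt_ext_pw (F G : R -> R) a b : (forall x, F x = G x) -> RInt F a b = RInt G a b.
Proof. intros H. apply RInt_ext. intros x _. apply H. Qed.

Lemma RInt_eq_0 (F : R -> R) a b :
  (forall x, Rmin a b < x < Rmax a b -> F x = 0) -> RInt F a b = 0.
Proof.
  intros H. rewrite (RInt_ext F (fun _ => 0)) by exact H. rewrite RInt_const.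
  apply (scal_zero_r (V:=R_ModuleSpace)).
Qed.

Lemma RInt_Chasles_cont (F : R -> R) a b c : contR F ->
  RInt F a b + RInt F b c = RInt F a c.
Proof. intros H. apply (RInt_Chasles F a b c); apply contR_ex_RInt, H. Qed.

Lemma RInt_scal_cont (F : R -> R) c a b : contR F ->
  RInt (fun t => c * F t) a b = c * RInt F a b.
Proof. intros HF. apply (RInt_scal F a b c), contR_ex_RInt, HF. Qed.

Lemma RInt_support (F : R -> R) a lo hi b : contR F ->
  (forall x, x < lo \/ hi < x -> F x = 0) -> a <= lo -> lo <= hi -> hi <= b ->
  RInt F a b = RInt F lo hi.
Proof.
  intros HF HZ H1 H2 H3.
  rewrite <- (RInt_Chasles_cont F a lo b HF), <- (RInt_Chasles_cont F lo hi b HF).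
  rewrite (RInt_eq_0 F a lo), (RInt_eq_0 F hi b), Rplus_0_l, Rplus_0_r; [reflexivity| |].
  - intros x Hx. apply HZ. right. rewrite Rmin_left in Hx; lra.
  - intros x Hx. apply HZ. left. rewrite Rmax_right in Hx; lra.
Qed.

Lemma E_ext (F G : R -> R) : (forall x, F x = G x) -> E F = E G.
Proof. intros H. replace G with F; auto. apply functional_extensionality; auto. Qed.

Lemma E_support (F : R -> R) lo hi : contR F ->
  (forall x, x < lo \/ hi < x -> F x = 0) -> lo <= hi -> E F = RInt F lo hi.
Proof.
  intros HF HZ Hlh. apply is_RInt_gen_unique. intros P HP.
  apply Filter_prod with (fun u => u < lo) (fun v => hi < v); [exists lo; auto|exists hi; auto|].
  intros u v Hu Hv. exists (RInt F lo hi). split.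
  - simpl. rewrite <- (RInt_support F u lo hi v) by (auto; lra).
    apply RInt_correct, contR_ex_RInt, HF.
  - apply locally_singleton, HP.
Qed.

Lemma E_eq_0 (F : R -> R) : (forall x, F x = 0) -> E F = 0.
Proof.
  intros H. rewrite (E_ext F (fun _ => 0)) by exact H.
  rewrite (E_support _ 0 0); [apply RInt_eq_0; auto|solve_cont|auto|lra].
Qed.

Lemma E_comp_affine (g : R -> R) (N a L : R) : 0 < N -> contR g ->
  (forall x, L < Rabs x -> g x = 0) ->
  E (fun t => g (N * (a + t))) = / N * E g.
Proof.
  intros HN Hg HL. pose proof (Rabs_pos L) as HL0.
  assert (Hsupp : forall x, x < - Rabs L \/ Rabs L < x -> g x = 0).
  { intros x Hx. apply HL. revert Hx. unfold Rabs. destruct (Rcase_abs x), (Rcase_abs L); lra. }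
  assert (HgN : contR (fun t => g (N * (a + t)))) by solve_cont.
  rewrite (E_support g (- Rabs L) (Rabs L)), (E_support _ (- Rabs L / N - a) (Rabs L / N - a));
    auto; try lra.
  - replace (RInt g (- Rabs L) (Rabs L))
      with (RInt g (N * (- Rabs L / N - a) + N * a) (N * (Rabs L / N - a) + N * a))
      by (f_equal; field; lra).
    rewrite <- (RInt_comp_lin g N (N * a)) by apply contR_ex_RInt, Hg.
    rewrite (RInt_ext (fun y => scal N (g (N * y + N * a))) (fun y => N * g (N * (a + y)))),
      RInt_scal_cont by (auto; intros y _; unfold scal; simpl; unfold mult; simpl;
                         do 2 f_equal; ring).
    abstract_integrals. field. lra.
  - intros x Hx. apply Hsupp.
    destruct Hx as [Hx|Hx]; [left|right]; apply (Rmult_lt_compat_l N) in Hx; auto.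
    + replace (N * (- Rabs L / N - a)) with (- Rabs L - N * a) in Hx by (field; lra). lra.
    + replace (N * (Rabs L / N - a)) with (Rabs L - N * a) in Hx by (field; lra). lra.
  - apply Rplus_le_compat_r. unfold Rdiv. apply Rmult_le_compat_r; [|lra].
    left. apply Rinv_0_lt_compat, HN.
Qed.

Lemma E_translate (g : R -> R) (c L : R) : contR g -> (forall x, L < Rabs x -> g x = 0) ->
  E (fun s => g (c + s)) = E g.
Proof.
  intros Hg HL. rewrite <- (Rmult_1_l (E g)), <- Rinv_1, <- (E_comp_affine g 1 c L) by (auto; lra).
  apply E_ext. intros s. rewrite Rmult_1_l. reflexivity.
Qed.

Lemma is_RInt_0 a b : is_RInt (fun _ => 0) a b 0.
Proof.
  pose proof (is_RInt_const (V:=R_NormedModule) a b 0) as H.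
  rewrite (scal_zero_r (V:=R_ModuleSpace)) in H. exact H.
Qed.

Lemma is_RInt_sum_n_m (F : nat -> R -> R) (I : nat -> R) a b n m :
  (forall i, is_RInt (F i) a b (I i)) ->
  is_RInt (fun t => sum_n_m (fun i => F i t) n m) a b (sum_n_m I n m).
Proof.
  intros HF. destruct (le_lt_dec n m) as [Hnm|Hmn].
  - induction Hnm as [|m Hnm IH].
    + apply (is_RInt_ext (F n)); [intros; rewrite sum_n_n; reflexivity|].
      rewrite sum_n_n. apply HF.
    + apply (is_RInt_ext (fun t => plus (sum_n_m (fun i => F i t) n m) (F (S m) t))).
      { intros; symmetry; apply sum_n_Sm; lia. }
      rewrite sum_n_Sm by lia. apply (is_RInt_plus (V:=R_NormedModule)); auto.
  - apply (is_RInt_ext (fun _ => 0)); [intros; rewrite sum_n_m_zero by lia; reflexivity|].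
    rewrite sum_n_m_zero by lia. apply is_RInt_0.
Qed.

Lemma is_RInt_sumN N (F : nat -> R -> R) (I : nat -> R) a b :
  (forall i, is_RInt (F i) a b (I i)) ->
  is_RInt (fun t => sumN N (fun i => F i t)) a b (sumN N I).
Proof. apply is_RInt_sum_n_m. Qed.

Lemma is_RInt_if_0 (c : bool) (F : R -> R) I a b : is_RInt F a b I ->
  is_RInt (fun t => if c then 0 else F t) a b (if c then 0 else I).
Proof.
  destruct c; [intros _; apply is_RInt_0|auto].
Qed.

Lemma is_RInt_pair_sum N (h : nat -> nat -> R -> R) (I : nat -> nat -> R) a b :
  (forall i j, is_RInt (h i j) a b (I i j)) ->
  is_RInt (fun t => pair_sum N (fun i j => h i j t)) a b (pair_sum N I).
Proof.
  intros H. apply is_RInt_sumN. intros i. apply is_RInt_sumN. intros j. apply is_RInt_if_0, H.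
Qed.

Lemma is_RInt_triple_sum N (h : nat -> nat -> nat -> R -> R) (I : nat -> nat -> nat -> R) a b :
  (forall i j l, is_RInt (h i j l) a b (I i j l)) ->
  is_RInt (fun t => triple_sum N (fun i j l => h i j l t)) a b (triple_sum N I).
Proof.
  intros H. apply is_RInt_sumN. intros i. apply is_RInt_sumN. intros j.
  apply is_RInt_sumN. intros l. apply is_RInt_if_0, H.
Qed.

Lemma RInt_sumZ (H : Z -> R -> R) a b K : (forall k, contR (H k)) ->
  (forall k t, (Z.of_nat K < Z.abs k)%Z -> Rmin a b <= t <= Rmax a b -> H k t = 0) ->
  RInt (fun t => sumZ (fun k => H k t)) a b = sumZ (fun k => RInt (H k) a b).
Proof.
  intros Hcont Hsupp.
  assert (HI : forall k, is_RInt (H k) a b (RInt (H k) a b))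
    by (intros; apply (RInt_correct (V:=R_CompleteNormedModule)), contR_ex_RInt, Hcont).
  rewrite (sumZ_upto_eq K) by (intros k Hk; apply RInt_eq_0; intros; apply Hsupp; auto; lra).
  apply is_RInt_unique. apply (is_RInt_ext (fun t => sumZ_upto K (fun k => H k t))).
  - intros t Ht. symmetry. apply sumZ_upto_eq. intros k Hk. apply Hsupp; auto; lra.
  - apply (is_RInt_plus (V:=R_NormedModule)); apply is_RInt_sum_n_m; auto.
Qed.

Lemma nat_above (r : R) : exists K : nat, r < INR K.
Proof.
  destruct (archimed (Rabs r)) as [H1 _].
  assert (H0 : (0 < up (Rabs r))%Z) by (apply lt_0_IZR; pose proof (Rabs_pos r); lra).
  exists (Z.to_nat (up (Rabs r))). rewrite INR_IZR_INZ, Z2Nat.id by lia.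
  pose proof (Rle_abs r). lra.
Qed.

Lemma IZR_outside K k : (Z.of_nat K < Z.abs k)%Z -> IZR k <= - INR K - 1 \/ INR K + 1 <= IZR k.
Proof.
  intros H. rewrite INR_IZR_INZ, <- opp_IZR, <- minus_IZR, <- plus_IZR.
  destruct (Z_le_gt_dec 0 k); [right|left]; apply IZR_le; lia.
Qed.

Lemma RInt_Chasles_unit_pos (F : R -> R) K : contR F ->
  sum_n (fun n => RInt F (INR n) (INR n + 1)) K = RInt F 0 (INR K + 1).
Proof.
  intros HF. induction K as [|K IH].
  - rewrite sum_O. simpl. rewrite Rplus_0_l. reflexivity.
  - rewrite sum_Sn, IH, S_INR. apply RInt_Chasles_cont, HF.
Qed.

Lemma RInt_Chasles_unit_neg (F : R -> R) K : contR F ->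
  sum_n (fun n => RInt F (- INR n - 1) (- INR n)) K = RInt F (- INR K - 1) 0.
Proof.
  intros HF. induction K as [|K IH].
  - rewrite sum_O. simpl. rewrite Ropp_0, Rminus_0_l. reflexivity.
  - rewrite sum_Sn, IH, S_INR. simpl. rewrite Rplus_comm.
    replace (- (INR K + 1)) with (- INR K - 1) by ring.
    apply RInt_Chasles_cont, HF.
Qed.

Lemma RInt_periodic_unfold (B c : R -> R) (lo hi : R) : contR B -> contR c ->
  (forall t (m : Z), B (t + IZR m) = B t) ->
  (forall x, x < lo \/ hi < x -> c x = 0) -> lo <= hi ->
  RInt (fun s => B s * sumZ (fun k => c (s + IZR k))) 0 1 = RInt (fun t => B t * c t) lo hi.
Proof.
  intros HB Hc Hper Hz Hlh.
  set (F := fun t => B t * c t).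
  assert (HF : contR F) by (unfold F; solve_cont).
  destruct (nat_above (Rabs lo + Rabs hi + 1)) as [K HK].
  pose proof (Rle_abs lo). pose proof (Rle_abs hi). pose proof (Rle_abs (- lo)).
  pose proof (Rabs_pos lo). pose proof (Rabs_pos hi).
  rewrite Rabs_Ropp in *.
  assert (Hunit : forall k : Z, RInt (fun s => B s * c (s + IZR k)) 0 1 = RInt F (IZR k) (IZR k + 1)).
  { intros k. transitivity (RInt F (1 * 0 + IZR k) (1 * 1 + IZR k)); [|f_equal; ring].
    rewrite <- RInt_comp_lin by apply contR_ex_RInt, HF.
    apply RInt_ext. intros x _. unfold F, scal; simpl; unfold mult; simpl.
    rewrite !Rmult_1_l, Hper. reflexivity. }
  rewrite (RInt_ext _ (fun s => sumZ (fun k => B s * c (s + IZR k))))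
    by (intros; rewrite sumZ_scal_l; reflexivity).
  rewrite (RInt_sumZ _ 0 1 K), (sumZ_ext _ _ Hunit), (sumZ_upto_eq K).
  - unfold sumZ_upto.
    rewrite (sum_n_ext _ (fun n => RInt F (INR n) (INR n + 1)))
      by (intros n; rewrite INR_IZR_INZ; reflexivity).
    rewrite (sum_n_ext (fun n => RInt F (IZR (- Z.of_nat n - 1)) (IZR (- Z.of_nat n - 1) + 1))
               (fun n => RInt F (- INR n - 1) (- INR n)))
      by (intros n; rewrite minus_IZR, opp_IZR, <- INR_IZR_INZ; f_equal; ring).
    rewrite RInt_Chasles_unit_pos, RInt_Chasles_unit_neg, Rplus_comm, RInt_Chasles_cont by exact HF.
    apply (RInt_support F); auto; try lra.
    intros x Hx. unfold F. rewrite Hz; auto; ring.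
  - intros k Hk. apply RInt_eq_0. intros x Hx.
    rewrite Rmin_left in Hx by lra. rewrite Rmax_right in Hx by lra.
    unfold F. rewrite Hz; [ring|]. destruct (IZR_outside K k Hk); lra.
  - intros k. solve_cont.
  - intros k t Hk Ht. rewrite Rmin_left in Ht by lra. rewrite Rmax_right in Ht by lra.
    rewrite Hz; [ring|]. destruct (IZR_outside K k Hk); lra.
Qed.

Lemma shift_far (a L : R) : exists K, forall k, (Z.of_nat K < Z.abs k)%Z -> L < Rabs (a + IZR k).
Proof.
  destruct (nat_above (Rabs a + Rabs L)) as [K HK]. exists K. intros k Hk.
  pose proof (Rle_abs L). pose proof (Rle_abs a). pose proof (Rle_abs (- a)).
  rewrite Rabs_Ropp in *.
  destruct (IZR_outside K k Hk).
  - apply Rlt_le_trans with (- (a + IZR k)); [lra|]. rewrite <- Rabs_Ropp. apply Rle_abs.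
  - apply Rlt_le_trans with (a + IZR k); [lra|]. apply Rle_abs.
Qed.

Lemma Rabs_le_mult (Nr x : R) : 1 <= Nr -> Rabs x <= Rabs (Nr * x).
Proof.
  intros H. rewrite Rabs_mult, (Rabs_right Nr) by lra. pose proof (Rabs_pos x). nra.
Qed.

Section Periodization.

Variables (f : R -> R) (M : R).
Hypotheses (f_cont : contR f) (M_pos : 0 < M) (f_supp : forall x, M < Rabs x -> f x = 0).
Variable Nr : R.
Hypothesis Nr_ge1 : 1 <= Nr.

Definition periodized (a s : R) : R := sumZ (fun k => f (Nr * (a + IZR k + s))).

Lemma f_scaled_supp a x : x < - a - M \/ - a + M < x -> f (Nr * (a + x)) = 0.
Proof.
  intros Hx. apply f_supp. eapply Rlt_le_trans; [|apply Rabs_le_mult, Nr_ge1].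
  unfold Rabs; destruct (Rcase_abs (a + x)); lra.
Qed.

Lemma f_scaled_far a c D : exists K, forall k t,
  (Z.of_nat K < Z.abs k)%Z -> Rabs (t - c) <= D -> f (Nr * (a + IZR k + t)) = 0.
Proof.
  destruct (shift_far (a + c) (M + D)) as [K HK]. exists K.
  intros k t Hk Ht. apply f_supp. eapply Rlt_le_trans; [|apply Rabs_le_mult, Nr_ge1].
  specialize (HK k Hk).
  pose proof (Rabs_triang_inv (a + c + IZR k) (c - t)) as Htri.
  replace (a + c + IZR k - (c - t)) with (a + IZR k + t) in Htri by ring.
  rewrite Rabs_minus_sym in Htri. lra.
Qed.

Lemma periodized_finsupp a s : finsuppZ (fun k => f (Nr * (a + IZR k + s))).
Proof.
  destruct (f_scaled_far a s 0) as [K HK]. exists K.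
  intros k Hk. apply HK; auto. rewrite Rminus_diag, Rabs_R0. lra.
Qed.

Lemma periodized_cont a : contR (periodized a).
Proof.
  intros t0. destruct (f_scaled_far a t0 1) as [K HK].
  apply (continuous_ext_loc _ (fun t => sumZ_upto K (fun k => f (Nr * (a + IZR k + t))))).
  - exists (mkposreal 1 Rlt_0_1). intros t Ht. symmetry. apply sumZ_upto_eq.
    intros k Hk. apply HK; auto. left. exact Ht.
  - apply cont_plus; apply cont_sum_n; intros i; solve_cont.
Qed.

Lemma periodized_periodic a t (m : Z) : periodized a (t + IZR m) = periodized a t.
Proof.
  unfold periodized. rewrite <- (sumZ_shift _ m (periodized_finsupp a t)).
  apply sumZ_ext. intros k. rewrite plus_IZR. f_equal. ring.
Qed.

Lemma RInt_window_E (G : R -> R) a : contR G ->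
  RInt (fun t => G t * f (Nr * (a + t))) (- a - M) (- a + M) = E (fun t => G t * f (Nr * (a + t))).
Proof.
  intros HG. symmetry. apply E_support; [solve_cont| |lra].
  intros x Hx. rewrite f_scaled_supp by exact Hx. ring.
Qed.

(* For [2 M < Nr] the translates [f (Nr (a + k + s))] have disjoint supports in [k]. *)
Lemma sumZ_comp_periodized a s (phi : R -> R) : 2 * M < Nr -> phi 0 = 0 ->
  sumZ (fun k => phi (f (Nr * (a + IZR k + s)))) = phi (periodized a s).
Proof.
  intros HNr Hphi. apply (sumZ_comp_single (fun k => f (Nr * (a + IZR k + s))) phi Hphi).
  intros k1 k2 H1 H2.
  assert (Hin : forall k, f (Nr * (a + IZR k + s)) <> 0 -> Rabs (Nr * (a + IZR k + s)) <= M).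
  { intros k Hk. apply Rnot_lt_le. intros Hlt. apply Hk, f_supp, Hlt. }
  pose proof (Rabs_triang (Nr * (a + IZR k1 + s)) (- (Nr * (a + IZR k2 + s)))) as Htri.
  rewrite Rabs_Ropp in Htri.
  replace (Nr * (a + IZR k1 + s) + - (Nr * (a + IZR k2 + s))) with (Nr * IZR (k1 - k2)) in Htri
    by (rewrite minus_IZR; ring).
  rewrite Rabs_mult, (Rabs_right Nr) in Htri by lra.
  destruct (Z.eq_dec k1 k2) as [|Hne]; [assumption|exfalso].
  assert (1 <= Rabs (IZR (k1 - k2))) by (rewrite <- abs_IZR; apply IZR_le; lia).
  pose proof (Hin k1 H1). pose proof (Hin k2 H2). nra.
Qed.

Lemma window_dist a t : Rmin (- a - M) (- a + M) <= t <= Rmax (- a - M) (- a + M) ->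
  Rabs (t - (- a - M)) <= 2 * M.
Proof.
  intros Ht. rewrite Rmin_left, Rmax_right in Ht by lra. rewrite Rabs_right; lra.
Qed.

Lemma RInt_periodized_unfold (B : R -> R) a : contR B -> (forall t (m : Z), B (t + IZR m) = B t) ->
  RInt (fun s => B s * periodized a s) 0 1 = E (fun t => B t * f (Nr * (a + t))).
Proof.
  intros HB Hper. rewrite <- RInt_window_E by exact HB.
  rewrite <- (RInt_periodic_unfold B (fun t => f (Nr * (a + t))));
    [|auto|solve_cont|auto|apply f_scaled_supp|lra].
  apply RInt_ext. intros s _. unfold periodized. f_equal.
  apply sumZ_ext. intros k. do 2 f_equal. ring.
Qed.

Definition pair_kernel (z : R) : R := E (fun u => f u ^ 2 * f (u - z)).

Lemma pair_kernel_supp z : 2 * M < Rabs z -> pair_kernel z = 0.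
Proof.
  intros Hz. apply E_eq_0. intros u. destruct (Rle_dec (Rabs u) M).
  - rewrite (f_supp (u - z)); [ring|].
    pose proof (Rabs_triang_inv z u). rewrite Rabs_minus_sym. lra.
  - rewrite f_supp; [ring|lra].
Qed.

Lemma RInt_periodized_sq_mul a1 a2 : 2 * M < Nr ->
  RInt (fun s => periodized a1 s ^ 2 * periodized a2 s) 0 1
  = / Nr * sumZ (fun k => pair_kernel (Nr * (a1 - a2 + IZR k))).
Proof.
  intros HNr.
  rewrite (RInt_periodized_unfold (fun s => periodized a1 s ^ 2));
    [|pose proof periodized_cont a1; solve_cont|intros; rewrite periodized_periodic; reflexivity].
  rewrite <- (RInt_window_E (fun t => periodized a1 t ^ 2)) by (pose proof periodized_cont a1; solve_cont).
  rewrite (RInt_ext_pw _ (fun t => sumZ (fun k => f (Nr * (a1 + IZR k + t)) ^ 2 * f (Nr * (a2 + t))))).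
  2: { intros t. rewrite sumZ_scal_r. f_equal.
       symmetry. apply (sumZ_comp_periodized a1 t (fun x => x ^ 2)); [lra|ring]. }
  destruct (f_scaled_far a1 (- a2 - M) (2 * M)) as [K HK].
  rewrite (RInt_sumZ _ (- a2 - M) (- a2 + M) K).
  - rewrite <- sumZ_scal_l. apply sumZ_ext. intros k.
    rewrite (RInt_window_E (fun t => f (Nr * (a1 + IZR k + t)) ^ 2)) by solve_cont.
    pose (g := fun u => f u ^ 2 * f (u - Nr * (a1 - a2 + IZR k))).
    transitivity (E (fun t => g (Nr * ((a1 + IZR k) + t)))).
    { apply E_ext. intros t. unfold g.
      replace (Nr * (a1 + IZR k + t) - Nr * (a1 - a2 + IZR k)) with (Nr * (a2 + t)) by ring.
      reflexivity. }
    apply (E_comp_affine g Nr (a1 + IZR k) M); [lra|unfold g; solve_cont|].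
    intros x Hx. unfold g. rewrite f_supp by exact Hx. ring.
  - intros k. solve_cont.
  - intros k t Hk Ht. rewrite HK by (auto; apply window_dist, Ht). ring.
Qed.

Lemma RInt_periodized_cube a : 2 * M < Nr ->
  RInt (fun s => periodized a s ^ 3) 0 1 = / Nr * E (fun x => f x ^ 3).
Proof.
  intros HNr.
  rewrite (RInt_ext_pw _ (fun s => periodized a s ^ 2 * periodized a s)) by (intros; ring).
  rewrite RInt_periodized_sq_mul by exact HNr. f_equal.
  rewrite (sumZ_single _ 0).
  - unfold pair_kernel. apply E_ext. intros u.
    replace (u - Nr * (a - a + IZR 0)) with u by (simpl; ring). ring.
  - intros k Hk. apply pair_kernel_supp.
    replace (Nr * (a - a + IZR k)) with (Nr * IZR k) by ring.
    rewrite Rabs_mult, (Rabs_right Nr), <- abs_IZR by lra.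
    assert (1 <= IZR (Z.abs k)) by (apply IZR_le; lia). nra.
Qed.

Lemma Ftriple_supp z1 z2 : 2 * M < Rabs z2 -> Ftriple f z1 z2 = 0.
Proof.
  intros Hz. apply E_eq_0. intros s. destruct (Rle_dec (Rabs s) M).
  - rewrite (f_supp (z2 + s)); [ring|].
    pose proof (Rabs_triang_inv z2 (- s)). rewrite Rabs_Ropp in *.
    replace (z2 - - s) with (z2 + s) in * by ring. lra.
  - rewrite f_supp; [ring|lra].
Qed.

Lemma RInt_window_triple a1 a2 a3 k1 k3 :
  RInt (fun t => f (Nr * (a1 + IZR k1 + t)) * f (Nr * (a3 + IZR k3 + t)) * f (Nr * (a2 + t)))
    (- a2 - M) (- a2 + M)
  = / Nr * Ftriple f (Nr * (a1 - a2 + IZR k1)) (Nr * (a2 - a3 + IZR (- k3))).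
Proof.
  set (z1 := Nr * (a1 - a2 + IZR k1)). set (z2 := Nr * (a2 - a3 + IZR (- k3))).
  rewrite (RInt_window_E (fun t => f (Nr * (a1 + IZR k1 + t)) * f (Nr * (a3 + IZR k3 + t))))
    by solve_cont.
  pose (g := fun u => f (u + z1) * f (u - z2) * f u).
  assert (Hg : contR g) by (unfold g; solve_cont).
  assert (Hg_supp : forall x, M < Rabs x -> g x = 0)
    by (intros x Hx; unfold g; rewrite (f_supp x Hx); ring).
  transitivity (E (fun t => g (Nr * (a2 + t)))).
  { apply E_ext. intros t. unfold g, z1, z2.
    replace (Nr * (a2 + t) + Nr * (a1 - a2 + IZR k1)) with (Nr * (a1 + IZR k1 + t)) by ring.
    replace (Nr * (a2 + t) - Nr * (a2 - a3 + IZR (- k3))) with (Nr * (a3 + IZR k3 + t))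
      by (rewrite opp_IZR; ring).
    reflexivity. }
  rewrite (E_comp_affine g Nr a2 M) by (auto; lra). f_equal.
  unfold Ftriple. rewrite <- (E_translate g z2 M) by assumption.
  apply E_ext. intros s. unfold g.
  replace (z2 + s + z1) with (z1 + z2 + s) by ring. replace (z2 + s - z2) with s by ring. ring.
Qed.

Lemma RInt_periodized_mul3 a1 a2 a3 :
  RInt (fun s => periodized a1 s * periodized a2 s * periodized a3 s) 0 1
  = / Nr * sumZ (fun k1 => sumZ (fun k2 =>
      Ftriple f (Nr * (a1 - a2 + IZR k1)) (Nr * (a2 - a3 + IZR k2)))).
Proof.
  pose proof (periodized_cont a1). pose proof (periodized_cont a3).
  rewrite (RInt_ext_pw _ (fun s => (periodized a1 s * periodized a3 s) * periodized a2 s))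
    by (intros; ring).
  rewrite (RInt_periodized_unfold (fun s => periodized a1 s * periodized a3 s));
    [|solve_cont|intros; rewrite !periodized_periodic; reflexivity].
  rewrite <- (RInt_window_E (fun t => periodized a1 t * periodized a3 t)) by solve_cont.
  rewrite (RInt_ext_pw _ (fun t => sumZ (fun k1 =>
             f (Nr * (a1 + IZR k1 + t)) * (periodized a3 t * f (Nr * (a2 + t))))))
    by (intros; rewrite sumZ_scal_r; unfold periodized; ring).
  destruct (f_scaled_far a1 (- a2 - M) (2 * M)) as [K1 HK1].
  destruct (f_scaled_far a3 (- a2 - M) (2 * M)) as [K3 HK3].
  rewrite (RInt_sumZ _ (- a2 - M) (- a2 + M) K1).
  - rewrite <- sumZ_scal_l. apply sumZ_ext. intros k1.
    rewrite (RInt_ext_pw _ (fun t => sumZ (fun k3 =>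
               f (Nr * (a1 + IZR k1 + t)) * f (Nr * (a3 + IZR k3 + t)) * f (Nr * (a2 + t)))))
      by (intros; unfold periodized; rewrite <- sumZ_scal_r, <- sumZ_scal_l;
          apply sumZ_ext; intros; ring).
    rewrite (RInt_sumZ _ (- a2 - M) (- a2 + M) K3).
    + rewrite (sumZ_ext _ _ (RInt_window_triple a1 a2 a3 k1)), sumZ_scal_l. f_equal.
      apply (sumZ_opp (fun k2 => Ftriple f (Nr * (a1 - a2 + IZR k1)) (Nr * (a2 - a3 + IZR k2)))).
      destruct (shift_far (a2 - a3) (2 * M)) as [K HK]. exists K. intros k Hk.
      apply Ftriple_supp. eapply Rlt_le_trans; [apply (HK k Hk)|apply Rabs_le_mult, Nr_ge1].
    + intros k3. solve_cont.
    + intros k3 t Hk Ht. rewrite (HK3 k3 t) by (auto; apply window_dist, Ht). ring.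
  - intros k1. solve_cont.
  - intros k1 t Hk Ht. rewrite (HK1 k1 t) by (auto; apply window_dist, Ht). ring.
Qed.

End Periodization.

Lemma is_derive_cont (phi phi' : R -> R) : (forall x, is_derive phi x (phi' x)) -> contR phi.
Proof.
  intros H x. apply (ex_derive_continuous (K:=R_AbsRing) (V:=R_NormedModule)).
  exists (phi' x). apply H.
Qed.

Lemma smooth_Derive_n_cont f : smooth f -> forall n, contR (Derive_n f n).
Proof.
  intros Hs n x. apply (ex_derive_continuous (K:=R_AbsRing) (V:=R_NormedModule)), (Hs (S n) x).
Qed.

Lemma smooth_is_derive f : smooth f -> forall n x, is_derive (Derive_n f n) x (Derive_n f (S n) x).
Proof. intros Hs n x. apply Derive_correct, (Hs (S n) x). Qed.

Lemma is_derive_reflect_scal (phi : R -> R) d v u c : is_derive phi (v - u) d ->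
  is_derive (fun z => c * phi (v - z)) u (- (c * d)).
Proof.
  intros H.
  assert (Hl : is_derive (fun z => v - z) u (-1)) by (auto_derive; [auto|ring]).
  pose proof (is_derive_comp phi (fun z => v - z) u d (-1) H Hl) as Hc.
  apply (is_derive_scal _ _ c) in Hc.
  replace (- (c * d)) with (c * scal (-1) d); [exact Hc|].
  unfold scal; simpl; unfold mult; simpl. ring.
Qed.

Lemma continuity_pt_continuous (g : R -> R) x : continuous g x -> continuity_pt g x.
Proof. intros H. apply continuity_pt_filterlim, H. Qed.

Section SqCorrelation.

Variables (f : R -> R) (M : R).
Hypothesis f_cont : contR f.

(* [pair_kernel f] with the [u]-integral truncated to the support of [f] and the second
   factor freed: differentiating in [z] then only falls on [phi]. *)
Definition sq_corr (phi : R -> R) (z : R) : R := RInt (fun t => f t ^ 2 * phi (t - z)) (- M) M.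

Lemma is_derive_sq_corr (phi phi' : R -> R) :
  (forall x, is_derive phi x (phi' x)) -> contR phi' ->
  forall z, is_derive (sq_corr phi) z (- sq_corr phi' z).
Proof.
  intros Hd Hc' z.
  assert (Hc : contR phi) by (eapply is_derive_cont; eauto).
  assert (HD : forall u v, Derive (fun z => f v ^ 2 * phi (v - z)) u = - (f v ^ 2 * phi' (v - u)))
    by (intros; apply is_derive_unique, is_derive_reflect_scal, Hd).
  unfold sq_corr.
  replace (- RInt (fun t => f t ^ 2 * phi' (t - z)) (- M) M)
    with (RInt (fun t => Derive (fun u => f t ^ 2 * phi (t - u)) z) (- M) M).
  - apply (is_derive_RInt_param (fun u t => f t ^ 2 * phi (t - u))).
    + apply filter_forall. intros x t _. eexists. apply is_derive_reflect_scal, Hd.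
    + intros t _.
      apply (continuity_2d_pt_ext (fun u v => - (f v ^ 2 * phi' (v - u)))); [intros; symmetry; apply HD|].
      apply continuity_2d_pt_opp, continuity_2d_pt_mult.
      * apply (continuity_1d_2d_pt_comp (fun x => f x ^ 2) (fun _ v => v)).
        -- apply continuity_pt_continuous. solve_cont.
        -- apply continuity_2d_pt_id2.
      * apply (continuity_1d_2d_pt_comp phi' (fun u v => v - u)).
        -- apply continuity_pt_continuous, Hc'.
        -- apply continuity_2d_pt_minus; [apply continuity_2d_pt_id2|apply continuity_2d_pt_id1].
    + apply filter_forall. intros y. apply contR_ex_RInt. solve_cont.
  - rewrite (RInt_ext_pw _ (fun t => -1 * (f t ^ 2 * phi' (t - z)))) by (intros; rewrite HD; ring).
    rewrite RInt_scal_cont by solve_cont. abstract_integrals. ring.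
Qed.

Lemma Derive_n_sq_corr g : smooth g ->
  forall n, Derive_n (sq_corr g) n = fun z => (-1) ^ n * sq_corr (Derive_n g n) z.
Proof.
  intros Hs n. induction n as [|n IH]; apply functional_extensionality; intros z.
  - simpl. rewrite Rmult_1_l. reflexivity.
  - simpl. rewrite IH, Derive_scal.
    rewrite (is_derive_unique _ _ _ (is_derive_sq_corr _ _ (smooth_is_derive g Hs n)
                                       (smooth_Derive_n_cont g Hs (S n)) z)).
    simpl. ring.
Qed.

Lemma sq_corr_smooth g : smooth g -> smooth (sq_corr g).
Proof.
  intros Hs n x. destruct n as [|n]; [exact I|].
  simpl. rewrite (Derive_n_sq_corr g Hs n). eexists.
  apply is_derive_scal, is_derive_sq_corr; [apply smooth_is_derive | apply smooth_Derive_n_cont]; exact Hs.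
Qed.

Hypotheses (M_pos : 0 < M) (f_supp : forall x, M < Rabs x -> f x = 0).

Lemma pair_kernel_eq_sq_corr : pair_kernel f = sq_corr f.
Proof.
  apply functional_extensionality. intros z. unfold pair_kernel, sq_corr.
  apply E_support; [solve_cont| |lra].
  intros x Hx. rewrite (f_supp x); [ring|]. unfold Rabs; destruct (Rcase_abs x); lra.
Qed.

Lemma pair_kernel_Cc_infty : smooth f -> Cc_infty (pair_kernel f).
Proof.
  intros Hs. split.
  - rewrite pair_kernel_eq_sq_corr. apply sq_corr_smooth, Hs.
  - exists (2 * M). apply pair_kernel_supp; assumption.
Qed.

Definition antideriv (w : R) : R := RInt f (- M) w.

Lemma is_derive_antideriv w : is_derive antideriv w (f w).
Proof.
  apply (is_derive_RInt f antideriv (- M)); [|apply f_cont].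
  apply filter_forall. intros b. apply (RInt_correct (V:=R_CompleteNormedModule)), contR_ex_RInt, f_cont.
Qed.

Lemma f_supp_out x : x < - M \/ M < x -> f x = 0.
Proof. intros Hx. apply f_supp. unfold Rabs; destruct (Rcase_abs x); lra. Qed.

Lemma antideriv_right w : M <= w -> antideriv w = E f.
Proof.
  intros Hw. unfold antideriv. rewrite (E_support f (- M) M), (RInt_support f (- M) (- M) M w);
    auto; try lra; apply f_supp_out.
Qed.

Lemma antideriv_left w : w <= - M -> antideriv w = 0.
Proof.
  intros Hw. apply RInt_eq_0. intros x Hx. apply f_supp_out.
  rewrite Rmin_right, Rmax_left in Hx by lra. lra.
Qed.

Lemma sq_corr_antideriv_left : sq_corr antideriv (- (2 * M)) = E f * E (fun x => f x ^ 2).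
Proof.
  unfold sq_corr. rewrite (RInt_ext _ (fun t => E f * f t ^ 2)).
  - rewrite RInt_scal_cont by solve_cont. f_equal. symmetry.
    apply E_support; [solve_cont| |lra]. intros x Hx. rewrite f_supp_out by exact Hx. ring.
  - intros t Ht. rewrite Rmin_left, Rmax_right in Ht by lra.
    rewrite antideriv_right by lra. abstract_integrals. ring.
Qed.

Lemma sq_corr_antideriv_right : sq_corr antideriv (2 * M) = 0.
Proof.
  apply RInt_eq_0. intros t Ht. rewrite Rmin_left, Rmax_right in Ht by lra.
  rewrite antideriv_left by lra. ring.
Qed.

(* Fubini through the fundamental theorem of calculus: [z |-> sq_corr antideriv z]
   is a primitive of [- pair_kernel f], whose support lies in [[-2M, 2M]]. *)
Lemma E_pair_kernel : smooth f -> E (pair_kernel f) = E f * E (fun x => f x ^ 2).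
Proof.
  intros Hs.
  assert (Hc : contR (sq_corr f)) by exact (smooth_Derive_n_cont _ (sq_corr_smooth f Hs) 0).
  assert (HI : RInt (fun z => - sq_corr f z) (- (2 * M)) (2 * M)
               = sq_corr antideriv (2 * M) - sq_corr antideriv (- (2 * M))).
  { apply is_RInt_unique, (is_RInt_derive (sq_corr antideriv)).
    - intros z _. apply is_derive_sq_corr; [exact is_derive_antideriv | exact f_cont].
    - intros z _. solve_cont. }
  rewrite sq_corr_antideriv_left, sq_corr_antideriv_right in HI.
  rewrite (RInt_ext_pw _ (fun z => -1 * sq_corr f z)), RInt_scal_cont in HI
    by (auto; intros; ring).
  rewrite pair_kernel_eq_sq_corr, (E_support _ (- (2 * M)) (2 * M)); [lra|exact Hc| |lra].
  intros z Hz. rewrite <- pair_kernel_eq_sq_corr. apply (pair_kernel_supp f M); auto.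
  unfold Rabs; destruct (Rcase_abs z); lra.
Qed.

End SqCorrelation.

Definition pair_corr (g : R -> R) (y : nat -> R) (N : nat) : R :=
  / INR N * pair_sum N (fun n1 n2 => sumZ (fun k => g (INR N * (y n1 - y n2 + IZR k)))).

Lemma M3_expansion f M y N : contR f -> 0 < M -> (forall x, M < Rabs x -> f x = 0) ->
  2 * M < INR N ->
  M3 f y N = T3 f y N + 3 * pair_corr (pair_kernel f) y N + E (fun x => f x ^ 3).
Proof.
  intros f_cont M_pos f_supp HN.
  assert (HN1 : 1 <= INR N).
  { destruct N; [simpl in HN; lra|]. apply (le_INR 1). lia. }
  set (P := fun i => periodized f (INR N) (y i)).
  assert (HP : forall i, contR (P i)) by (intros; apply (periodized_cont f M); auto).
  assert (HT : is_RInt (fun s => triple_sum N (fun i j l => P i s * P j s * P l s)) 0 1 (T3 f y N)).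
  { unfold T3. rewrite <- triple_sum_scal_l. apply is_RInt_triple_sum. intros i j l.
    apply is_RInt_of_RInt; [solve_cont|]. apply (RInt_periodized_mul3 f M); auto. }
  assert (HD : is_RInt (fun s => 3 * pair_sum N (fun i j => P i s ^ 2 * P j s)) 0 1
                       (3 * pair_corr (pair_kernel f) y N)).
  { apply (is_RInt_scal (V:=R_NormedModule)). unfold pair_corr.
    rewrite <- pair_sum_scal_l. apply is_RInt_pair_sum. intros i j.
    apply is_RInt_of_RInt; [solve_cont|]. apply (RInt_periodized_sq_mul f M); auto. }
  assert (HC : is_RInt (fun s => sumN N (fun i => P i s ^ 3)) 0 1 (E (fun x => f x ^ 3))).
  { replace (E (fun x => f x ^ 3)) with (sumN N (fun _ => / INR N * E (fun x => f x ^ 3)))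
      by (rewrite sumN_const; field; lra).
    apply is_RInt_sumN. intros i.
    apply is_RInt_of_RInt; [solve_cont|]. apply (RInt_periodized_cube f M); auto. }
  unfold M3. apply is_RInt_unique.
  apply (is_RInt_ext (fun s => triple_sum N (fun i j l => P i s * P j s * P l s)
                               + 3 * pair_sum N (fun i j => P i s ^ 2 * P j s)
                               + sumN N (fun i => P i s ^ 3))).
  - intros s _. symmetry. apply (sumN_cube (fun n => P n s)).
  - apply (is_RInt_plus (V:=R_NormedModule)); [apply (is_RInt_plus (V:=R_NormedModule))|]; assumption.
Qed.

Lemma is_lim_seq_offset (u v w : nat -> R) (A L : R) :
  eventually (fun N => u N = v N + w N) -> is_lim_seq w L ->
  is_lim_seq v A <-> is_lim_seq u (A + L).
Proof.
  intros [N0 HN0] Hw. split; intros H.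
  - apply (is_lim_seq_ext_loc (fun N => v N + w N)); [exists N0; intros; symmetry; auto|].
    apply is_lim_seq_plus'; assumption.
  - apply (is_lim_seq_ext_loc (fun N => u N - w N)).
    { exists N0. intros N HN. rewrite HN0 by exact HN. ring. }
    replace A with (A + L - L) by ring. apply is_lim_seq_minus'; assumption.
Qed.

Theorem mainTheorem2 (y : nat -> R) (f : R -> R)
  (hy : forall n : nat, (1 <= n)%nat -> 0 < y n)
  (hpc : poissonian_pc y)
  (hf : Cc_infty f) :
  is_lim_seq (T3 f y) (E f ^ 3)
  <->
  is_lim_seq (M3 f y)
    (E f ^ 3 + 3 * E f * E (fun x => f x ^ 2) + E (fun x => f x ^ 3)).
Proof.
  destruct hf as [Hs [M0 HM0]].
  set (M := Rabs M0 + 1).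
  assert (M_pos : 0 < M) by (pose proof (Rabs_pos M0); unfold M; lra).
  assert (f_supp : forall x, M < Rabs x -> f x = 0)
    by (intros x Hx; apply HM0; pose proof (Rle_abs M0); unfold M in Hx; lra).
  assert (f_cont : contR f) by exact (smooth_Derive_n_cont f Hs 0).
  assert (Hpair : is_lim_seq (pair_corr (pair_kernel f) y) (E f * E (fun x => f x ^ 2))).
  { rewrite <- (E_pair_kernel f M); auto. apply hpc, (pair_kernel_Cc_infty f M); auto. }
  replace (E f ^ 3 + 3 * E f * E (fun x => f x ^ 2) + E (fun x => f x ^ 3))
    with (E f ^ 3 + (3 * (E f * E (fun x => f x ^ 2)) + E (fun x => f x ^ 3))) by ring.
  apply (is_lim_seq_offset _ _ (fun N => 3 * pair_corr (pair_kernel f) y N + E (fun x => f x ^ 3))).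
  - destruct (nat_above (2 * M)) as [N0 HN0]. exists N0. intros N HN.
    rewrite (M3_expansion f M y N); auto; [ring|].
    apply le_INR in HN. lra.
  - apply is_lim_seq_plus'; [apply (is_lim_seq_scal_l _ 3 _ Hpair)|apply is_lim_seq_const].
Qed.
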